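(* Let $\mathcal{R}^{rsc}$ be a rich single-crossing domain and $F:\mathcal{R}^{rsc}\to\mathbb{Z}$ a strategy-proof mechanism. Then $F$ is monotone: for all $R',R''\in\mathcal{R}^{rsc}$ with $R'\prec R''$, $F(R')\le F(R'')$ (i.e. either $F(R')=F(R'')$ or both coordinates of $F(R')$ are strictly smaller than those of $F(R'')$). The same holds for mechanisms defined on a closed interval $[\underline R,\overline R]\subseteq\mathcal{R}^{rsc}$.
   Context: $\mathbb{Z}=[0,\infty)\times[0,1]$; $(t',q')<(t'',q'')$ means $t'<t''$ and $q'<q''$, and $x\le y$ means $x=y$ or $x<y$; $\square(z)=\{x:x\le z\}$. A classical preference is a complete transitive relation $R$ on $\mathbb{Z}$ (strict part $P$, indifference $I$) strictly decreasing in $t$ for fixed $q$, strictly increasing in $q$ for fixed $t$, with closed upper and lower contour sets $UC(R,z)=\{x:xRz\}$, $LC(R,z)=\{x:zRx\}$. Distinct classical preferences satisfy single-crossing if any indifference set of one meets any indifference set of the other in at most one point. A rich single-crossing domain $\mathcal{R}^{rsc}$ is a set of pairwise single-crossing classical preferences such that for all $x'<x''$ some member is indifferent between $x'$ and $x''$. For distinct members, $R'\prec R''$ means $\square(z)\cap UC(R'',z)\subseteq\square(z)\cap UC(R',z)$ for all $z\in\mathbb{Z}$; $\prec$ is a linear order. A mechanism is a map $F$ from the domain to $\mathbb{Z}$; it is strategy-proof if $F(R')\,R'\,F(R'')$ for all $R',R''$ in the domain. *)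

From Stdlib Require Import Reals.
Open Scope R_scope.

(* Consumption space Z = [0,oo) x [0,1]; a bundle is (t, q). *)
Definition bundle := (R * R)%type.
Definition inZ (z : bundle) : Prop := 0 <= fst z /\ 0 <= snd z <= 1.

Definition ltZ (x y : bundle) : Prop := fst x < fst y /\ snd x < snd y.
Definition leZ (x y : bundle) : Prop := x = y \/ ltZ x y.

(* A preference is a binary relation on bundles; "pref x y" reads x R y. *)
Definition pref := bundle -> bundle -> Prop.

Definition P_of (Rr : pref) (x y : bundle) : Prop := Rr x y /\ ~ Rr y x.
Definition I_of (Rr : pref) (x y : bundle) : Prop := Rr x y /\ Rr y x.

Definition closed_in_Z (S : bundle -> Prop) : Prop :=
  forall z, inZ z -> ~ S z ->
    exists eps, 0 < eps /\
      forall x, inZ x -> Rabs (fst x - fst z) < eps -> Rabs (snd x - snd z) < eps -> ~ S x.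

Definition UC (Rr : pref) (z : bundle) : bundle -> Prop := fun x => inZ x /\ Rr x z.
Definition LC (Rr : pref) (z : bundle) : bundle -> Prop := fun x => inZ x /\ Rr z x.

Definition classical (Rr : pref) : Prop :=
  (forall x y, inZ x -> inZ y -> Rr x y \/ Rr y x) /\
  (forall x y w, inZ x -> inZ y -> inZ w -> Rr x y -> Rr y w -> Rr x w) /\
  (forall t t' q, inZ (t, q) -> inZ (t', q) -> t < t' -> P_of Rr (t, q) (t', q)) /\
  (forall t q q', inZ (t, q) -> inZ (t, q') -> q < q' -> P_of Rr (t, q') (t, q)) /\
  (forall z, inZ z -> closed_in_Z (UC Rr z)) /\
  (forall z, inZ z -> closed_in_Z (LC Rr z)).

Definition same_pref (R1 R2 : pref) : Prop :=
  forall x y, inZ x -> inZ y -> (R1 x y <-> R2 x y).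

Definition single_crossing (R1 R2 : pref) : Prop :=
  forall z1 z2 x y, inZ z1 -> inZ z2 -> inZ x -> inZ y ->
    I_of R1 x z1 -> I_of R2 x z2 -> I_of R1 y z1 -> I_of R2 y z2 -> x = y.

Definition rich_single_crossing (D : pref -> Prop) : Prop :=
  (forall Rr, D Rr -> classical Rr) /\
  (forall R1 R2, D R1 -> D R2 -> ~ same_pref R1 R2 -> single_crossing R1 R2) /\
  (forall x y, inZ x -> inZ y -> ltZ x y -> exists Rr, D Rr /\ I_of Rr x y).

(* R' ≺ R'' (for distinct preferences):
   box(z) ∩ UC(R'',z) ⊆ box(z) ∩ UC(R',z) for all z in Z. *)
Definition prec (R1 R2 : pref) : Prop :=
  ~ same_pref R1 R2 /\
  forall z x, inZ z -> inZ x -> leZ x z -> R2 x z -> R1 x z.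

Definition strategy_proof (D : pref -> Prop) (F : pref -> bundle) : Prop :=
  (forall Rr, D Rr -> inZ (F Rr)) /\
  (forall R1 R2, D R1 -> D R2 -> R1 (F R1) (F R2)).

Definition monotone_on (D : pref -> Prop) (F : pref -> bundle) : Prop :=
  forall R1 R2, D R1 -> D R2 -> prec R1 R2 -> leZ (F R1) (F R2).

Definition interval (D : pref -> Prop) (Rlo Rhi : pref) : pref -> Prop :=
  fun Rr => D Rr /\ (same_pref Rlo Rr \/ prec Rlo Rr) /\ (same_pref Rr Rhi \/ prec Rr Rhi).

(* Let a = F(R') and b = F(R''); strategy-proofness gives a R' b and b R'' a.
   Monotonicity of each preference in t and q rules out every relative position
   of a and b except a = b, a < b and b < a.  If b < a, then b R'' a and R' ≺ R''
   give b R' a, so a and b are R'-indifferent; single crossing then forces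
   a P'' b.  By closedness of the lower contour set of R'' at a, a slightly more
   expensive bundle b' = (t_b + d, q_b) still satisfies b' < a and b' R'' a,
   hence b' R' a R' b, contradicting that R' is strictly decreasing in t. *)

From Stdlib Require Import Reals Lra.

Section ClassicalPreference.

Variable Rr : pref.
Hypothesis Hcl : classical Rr.

Lemma classical_refl x : inZ x -> Rr x x.
Proof.
  intro Hx. destruct Hcl as [Hcomplete _].
  destruct (Hcomplete x x Hx Hx); assumption.
Qed.

Lemma classical_P_trans x y w : inZ x -> inZ y -> inZ w ->
  P_of Rr x y -> P_of Rr y w -> P_of Rr x w.
Proof.
  destruct Hcl as [_ [Htrans _]].
  intros Hx Hy Hw [Hxy Hyx] [Hyw Hwy]. split.
  - exact (Htrans x y w Hx Hy Hw Hxy Hyw).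
  - intro Hwx. exact (Hyx (Htrans y w x Hy Hw Hx Hyw Hwx)).
Qed.

Lemma classical_dominance tx qx ty qy : inZ (tx, qx) -> inZ (ty, qy) ->
  tx <= ty -> qy <= qx -> (tx, qx) <> (ty, qy) -> P_of Rr (tx, qx) (ty, qy).
Proof.
  destruct Hcl as [_ [_ [Hdec_t [Hinc_q _]]]].
  unfold inZ; simpl. intros Hx Hy Ht Hq Hne.
  destruct (Req_dec tx ty) as [Et|Et]; destruct (Req_dec qx qy) as [Eq|Eq].
  - subst; congruence.
  - subst. apply Hinc_q; unfold inZ; simpl; lra.
  - subst. apply Hdec_t; unfold inZ; simpl; lra.
  - apply classical_P_trans with (tx, qy); unfold inZ; simpl; try lra.
    + apply Hinc_q; unfold inZ; simpl; lra.
    + apply Hdec_t; unfold inZ; simpl; lra.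
Qed.

Lemma not_pref_raise_t a b bound : inZ a -> inZ b -> ~ Rr a b -> 0 < bound ->
  exists d, 0 < d < bound /\ inZ (fst b + d, snd b) /\ ~ Rr a (fst b + d, snd b).
Proof.
  destruct Hcl as [_ [_ [_ [_ [_ Hclosed_LC]]]]].
  intros Ha Hb Hab Hbound.
  destruct (Hclosed_LC a Ha b Hb) as [eps [Heps Hopen]].
  { intros [_ H]. exact (Hab H). }
  set (d := Rmin (eps / 2) (bound / 2)).
  assert (Hd : 0 < d) by (apply Rmin_pos; lra).
  assert (Hd_eps : d <= eps / 2) by apply Rmin_l.
  assert (Hd_bound : d <= bound / 2) by apply Rmin_r.
  assert (Hb' : inZ (fst b + d, snd b)) by (unfold inZ in *; simpl; lra).
  exists d. split; [lra|split; [exact Hb'|]].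
  intro H. apply (Hopen _ Hb'); simpl.
  - rewrite Rabs_right; lra.
  - rewrite Rminus_diag, Rabs_R0; lra.
  - split; assumption.
Qed.

End ClassicalPreference.

Section SingleCrossingPair.

Variables R1 R2 : pref.
Hypothesis Hcl1 : classical R1.
Hypothesis Hcl2 : classical R2.
Hypothesis Hsc : single_crossing R1 R2.
Hypothesis Hprec : prec R1 R2.

Lemma single_crossing_common_indifference a b : inZ a -> inZ b ->
  I_of R1 b a -> I_of R2 b a -> b = a.
Proof.
  intros Ha Hb H1 H2.
  assert (Haa1 : I_of R1 a a) by (split; apply classical_refl; assumption).
  assert (Haa2 : I_of R2 a a) by (split; apply classical_refl; assumption).
  exact (Hsc a a b a Ha Ha Hb Ha H1 H2 Haa1 Haa2).
Qed.

Lemma prec_no_reversal a b : inZ a -> inZ b -> ltZ b a ->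
  R1 a b -> R2 b a -> False.
Proof.
  destruct Hprec as [_ Hbelow].
  intros Ha Hb Hba H1ab H2ba.
  assert (Hnot2ab : ~ R2 a b).
  { intro H2ab.
    assert (H1ba : R1 b a) by (apply Hbelow; auto; right; exact Hba).
    assert (Eba : b = a)
      by (apply single_crossing_common_indifference; [| |split|split]; assumption).
    destruct Hba as [Ht _]. rewrite Eba in Ht. lra. }
  destruct (not_pref_raise_t R2 Hcl2 a b (fst a - fst b)) as [d [Hd [Hb' Hnot2ab']]];
    auto; [destruct Hba; lra|].
  set (b' := (fst b + d, snd b)) in *.
  assert (Hb'a : ltZ b' a) by (destruct Hba; split; simpl; lra).
  assert (H2b'a : R2 b' a).
  { destruct Hcl2 as [Hcomplete _]. destruct (Hcomplete b' a); tauto. }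
  assert (H1b'a : R1 b' a) by (apply Hbelow; auto; right; exact Hb'a).
  destruct Hcl1 as [_ [Htrans [Hdec_t _]]].
  destruct b as [tb qb].
  destruct (Hdec_t tb (tb + d) qb Hb Hb') as [_ Hnot]; [lra|].
  apply Hnot, (Htrans _ a); auto.
Qed.

Lemma prec_revealed_le a b : inZ a -> inZ b -> R1 a b -> R2 b a -> leZ a b.
Proof.
  destruct a as [ta qa], b as [tb qb].
  intros Ha Hb H1ab H2ba.
  assert (No2 : ta <= tb -> qb <= qa -> (ta, qa) <> (tb, qb) -> False)
    by (intros Ht Hq Hne;
        exact (proj2 (classical_dominance R2 Hcl2 ta qa tb qb Ha Hb Ht Hq Hne) H2ba)).
  assert (No1 : tb <= ta -> qa <= qb -> (ta, qa) <> (tb, qb) -> False)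
    by (intros Ht Hq Hne;
        exact (proj2 (classical_dominance R1 Hcl1 tb qb ta qa Hb Ha Ht Hq
                        (not_eq_sym Hne)) H1ab)).
  destruct (Req_dec ta tb) as [Et|Et]; destruct (Req_dec qa qb) as [Eq|Eq].
  - left; subst; reflexivity.
  - exfalso. subst tb. destruct (Rle_lt_dec qa qb);
      [apply No1|apply No2]; try lra; intro E; inversion E; lra.
  - exfalso. subst qb. destruct (Rle_lt_dec ta tb);
      [apply No2|apply No1]; try lra; intro E; inversion E; lra.
  - destruct (Rlt_le_dec ta tb); destruct (Rlt_le_dec qa qb).
    + right; split; simpl; assumption.
    + exfalso. apply No2; try lra. intro E; inversion E; lra.
    + exfalso. apply No1; try lra. intro E; inversion E; lra.
    + exfalso. apply (prec_no_reversal (ta, qa) (tb, qb)); auto.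
      split; simpl; lra.
Qed.

End SingleCrossingPair.

Lemma strategy_proof_monotone (D : pref -> Prop) (F : pref -> bundle) :
  (forall Rr, D Rr -> classical Rr) ->
  (forall R1 R2, D R1 -> D R2 -> ~ same_pref R1 R2 -> single_crossing R1 R2) ->
  strategy_proof D F -> monotone_on D F.
Proof.
  intros Hcl Hsc [Hin Hsp] R1 R2 D1 D2 Hprec.
  apply (prec_revealed_le R1 R2); auto.
  - apply Hsc; auto. apply Hprec.
  - exact (Hsp R1 R2 D1 D2).
  - exact (Hsp R2 R1 D2 D1).
Qed.

Theorem mainTheorem4 (D : pref -> Prop) :
  rich_single_crossing D ->
  (forall F : pref -> bundle, strategy_proof D F -> monotone_on D F) /\
  (forall (Rlo Rhi : pref) (F : pref -> bundle), D Rlo -> D Rhi ->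
     strategy_proof (interval D Rlo Rhi) F -> monotone_on (interval D Rlo Rhi) F).
Proof.
  intros [Hcl [Hsc _]]. split.
  - intros F. apply strategy_proof_monotone; assumption.
  - intros Rlo Rhi F _ _. apply strategy_proof_monotone.
    + intros Rr [HD _]. exact (Hcl Rr HD).
    + intros R1 R2 [HD1 _] [HD2 _]. exact (Hsc R1 R2 HD1 HD2).
Qed.
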